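(* Let $G$ be any GP 2 host graph in which every node is marked grey and is not a root and every edge is unmarked, with $n$ nodes and $m$ edges. When the GP 2 program is-dag is executed on $G$ (via the GP 2-to-C compiler, under the cost model below), it terminates in time $\mathrm{O}(n+m)$, i.e. linear in the size of $G$.
   Context: GP 2 semantics. Host graphs are finite directed graphs whose nodes and edges carry labels (lists of integers and strings) and marks (nodes: unmarked, red, green, blue, grey; edges: unmarked, red, green, blue, dashed); some nodes are roots. A rule is applied by finding an injective label- and mark-compatible match of its left-hand side (mark ''any'' matches every mark; roots match roots) satisfying the dangling condition, then changing matched items as prescribed by the right-hand side. Commands: a rule set call applies one applicable rule, failing if none applies; $P;Q$ sequencing; $P!$ iterates $P$ until it fails (break exits the innermost loop); ''try $C$ then $P$ else $Q$'' runs $C$ and continues with $P$ on its result if it succeeded, else $Q$ on the original graph; ''if $C$ then $P$ else $Q$'' runs $C$ on a copy then $P$ or $Q$ on the original; fail causes failure. Cost model (updated GP 2-to-C compiler). Host nodes are stored in separate linked lists per node mark, roots in a list, and each node has a two-dimensional array of linked lists of incident edges indexed by edge mark and orientation (incoming, outgoing, loop). Each elementary operation takes constant time: fetch first/next node with a given mark; fetch first/next root; given a node, fetch first/next incoming, outgoing or loop edge with a given mark; read degrees, mark, root status, source, target; set/clear/test a ''matched'' flag. Matching is a search using these operations; completing a rule application once a match is found takes constant time for rules that only change marks/roots. Running time is the total cost; the size of $G$ is $n+m$. The program is-dag (labels unchanged; rule edges directed from node 1 to node 2): Main = (init; DFS!; try unroot else break)!; Check DFS = try next_edge then (try {move, ignore}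 else (set_flag; break)) else (try loop; try back else break) Check = if flag then fail - init: grey non-root node becomes a red root. - unroot: red root becomes blue non-root. - set_flag: red root becomes green root. - flag: green root; no change. - next_edge: red root 1, node 2 of any mark, unmarked edge 1→2; edge becomes red. - ignore: red root 1, blue node 2, red edge 1→2; edge becomes blue. - move: red root 1, grey node 2, red edge 1→2; node 1 becomes red non-root, node 2 red root, edge dashed. - back: red non-root 1, red root 2, dashed edge 1→2; node 1 becomes red root, node 2 blue non-root, edge blue. - loop: red root with an unmarked loop; node becomes green root. *)

From Stdlib Require Import List Arith Bool ZArith String.
Import ListNotations.

Inductive atom := AInt (z : Z) | AStr (s : string).
Definition label := list atom.

Inductive nmark := NUnmarked | NRed | NGreen | NBlue | NGrey.
Inductive emark := EUnmarked | ERed | EGreen | EBlue | EDashed.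

Definition nmark_eqb (a b : nmark) : bool :=
  match a, b with
  | NUnmarked, NUnmarked | NRed, NRed | NGreen, NGreen
  | NBlue, NBlue | NGrey, NGrey => true
  | _, _ => false
  end.

Definition emark_eqb (a b : emark) : bool :=
  match a, b with
  | EUnmarked, EUnmarked | ERed, ERed | EGreen, EGreen
  | EBlue, EBlue | EDashed, EDashed => true
  | _, _ => false
  end.

(* Nodes are 0 .. nnodes-1; edge i (i < length edges) goes from
   fst (nth i edges) to snd (nth i edges). Parallel edges and loops allowed. *)
Record hgraph := mkHG {
  nnodes   : nat;
  edges    : list (nat * nat);
  nlabel   : nat -> label;
  elabel   : nat -> label;
  nmark_of : nat -> nmark;
  is_root  : nat -> bool;
  emark_of : nat -> emark
}.

Definition nedges (G : hgraph) : nat := List.length (edges G).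
Definition src (G : hgraph) (i : nat) : nat := fst (nth i (edges G) (0, 0)).
Definition tgt (G : hgraph) (i : nat) : nat := snd (nth i (edges G) (0, 0)).

Definition wf_graph (G : hgraph) : Prop :=
  forall i, i < nedges G -> src G i < nnodes G /\ tgt G i < nnodes G.

Definition initial_graph (G : hgraph) : Prop :=
  (forall v, v < nnodes G -> nmark_of G v = NGrey /\ is_root G v = false) /\
  (forall i, i < nedges G -> emark_of G i = EUnmarked).

Definition node_list G mu :=
  filter (fun v => nmark_eqb (nmark_of G v) mu) (seq 0 (nnodes G)).
Definition root_list G := filter (is_root G) (seq 0 (nnodes G)).
Definition out_list G v mu :=
  filter (fun i => Nat.eqb (src G i) v && negb (Nat.eqb (tgt G i) v)
                   && emark_eqb (emark_of G i) mu) (seq 0 (nedges G)).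
Definition in_list G v mu :=
  filter (fun i => Nat.eqb (tgt G i) v && negb (Nat.eqb (src G i) v)
                   && emark_eqb (emark_of G i) mu) (seq 0 (nedges G)).
Definition loop_list G v mu :=
  filter (fun i => Nat.eqb (src G i) v && Nat.eqb (tgt G i) v
                   && emark_eqb (emark_of G i) mu) (seq 0 (nedges G)).

(* Search through a list: each fetch (first/next, including the final fetch
   returning null) costs 1, plus the cost of checking the candidate
   (which may itself be a nested search). *)
Fixpoint scan {A B : Type} (l : list A) (chk : A -> option B * nat)
  : option B * nat :=
  match l with
  | [] => (None, 1)
  | x :: l' =>
      let (r, c) := chk x in
      match r with
      | Some b => (Some b, 1 + c)
      | None => let (r', c') := scan l' chk in (r', 1 + c + c')
      end
  end.

Definition upd {A : Type} (f : nat -> A) (x : nat) (a : A) : nat -> A :=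
  fun y => if Nat.eqb y x then a else f y.

Definition set_node (G : hgraph) (v : nat) (mu : nmark) (r : bool) : hgraph :=
  mkHG (nnodes G) (edges G) (nlabel G) (elabel G)
       (upd (nmark_of G) v mu) (upd (is_root G) v r) (emark_of G).

Definition set_edge (G : hgraph) (e : nat) (mu : emark) : hgraph :=
  mkHG (nnodes G) (edges G) (nlabel G) (elabel G)
       (nmark_of G) (is_root G) (upd (emark_of G) e mu).

Inductive rule :=
  r_init | r_unroot | r_set_flag | r_flag | r_next_edge
| r_ignore | r_move | r_back | r_loop.

Definition is_red G v := nmark_eqb (nmark_of G v) NRed.

Definition root_of_mark G mu : option nat * nat :=
  scan (root_list G)
       (fun v => (if nmark_eqb (nmark_of G v) mu then Some v else None, 1)).

(* Search for a red root and an edge of mark emu in list [lst G v emu]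
   satisfying [ok]; the root is matched first (roots first strategy). *)
Definition root_edge_search G (lst : hgraph -> nat -> emark -> list nat)
  (emu : emark) (ok : nat -> nat -> bool) : option nat * nat :=
  scan (root_list G)
    (fun v => if is_red G v then
                let (o, c) := scan (lst G v emu)
                                   (fun e => (if ok v e then Some e else None, 1)) in
                (o, 1 + c)
              else (None, 1)).

(* Attempt to apply a rule: resulting graph (if a match was found) and cost
   (search cost, plus 1 for completing the application once a match is found). *)
Definition rule_step (r : rule) (G : hgraph) : option hgraph * nat :=
  match r with
  | r_init =>
      let (o, c) := scan (node_list G NGrey)
                         (fun v => (if negb (is_root G v) then Some v else None, 1)) in
      match o with Some v => (Some (set_node G v NRed true), c + 1) | None => (None, c) end
  | r_unroot =>
      let (o, c) := root_of_mark G NRed in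
      match o with Some v => (Some (set_node G v NBlue false), c + 1) | None => (None, c) end
  | r_set_flag =>
      let (o, c) := root_of_mark G NRed in
      match o with Some v => (Some (set_node G v NGreen true), c + 1) | None => (None, c) end
  | r_flag =>
      let (o, c) := root_of_mark G NGreen in
      match o with Some _ => (Some G, c + 1) | None => (None, c) end
  | r_loop =>
      let (o, c) := root_edge_search G loop_list EUnmarked (fun _ _ => true) in
      match o with
      | Some e => (Some (set_node G (src G e) NGreen true), c + 1)
      | None => (None, c) end
  | r_next_edge =>
      (* node 2: any mark; only injectivity (node 2 <> node 1) is checked *)
      let (o, c) := root_edge_search G out_list EUnmarked
                      (fun v e => negb (Nat.eqb (tgt G e) v)) in
      match o with Some e => (Some (set_edge G e ERed), c + 1) | None => (None, c) end
  | r_ignore =>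
      let (o, c) := root_edge_search G out_list ERed
                      (fun v e => negb (Nat.eqb (tgt G e) v)
                                  && nmark_eqb (nmark_of G (tgt G e)) NBlue
                                  && negb (is_root G (tgt G e))) in
      match o with Some e => (Some (set_edge G e EBlue), c + 1) | None => (None, c) end
  | r_move =>
      let (o, c) := root_edge_search G out_list ERed
                      (fun v e => negb (Nat.eqb (tgt G e) v)
                                  && nmark_eqb (nmark_of G (tgt G e)) NGrey
                                  && negb (is_root G (tgt G e))) in
      match o with
      | Some e =>
          (Some (set_edge (set_node (set_node G (src G e) NRed false)
                                    (tgt G e) NRed true) e EDashed), c + 1)
      | None => (None, c) end
  | r_back =>
      (* node 2 (the red root) is matched first, then an incoming dashed edge
         whose source is a red non-root *)
      let (o, c) := root_edge_search G in_list EDashed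
                      (fun v e => negb (Nat.eqb (src G e) v)
                                  && is_red G (src G e)
                                  && negb (is_root G (src G e))) in
      match o with
      | Some e =>
          (Some (set_edge (set_node (set_node G (src G e) NRed true)
                                    (tgt G e) NBlue false) e EBlue), c + 1)
      | None => (None, c) end
  end.

Fixpoint call_rules (rs : list rule) (G : hgraph) : option hgraph * nat :=
  match rs with
  | [] => (None, 0)
  | r :: rs' =>
      let (o, c) := rule_step r G in
      match o with
      | Some G' => (Some G', c)
      | None => let (o', c') := call_rules rs' G in (o', c + c')
      end
  end.

Inductive cmd :=
| Call (rs : list rule)
| Skip
| Fail
| Break
| Seq (c1 c2 : cmd)
| Loop (c : cmd)
| TryElse (c p q : cmd)
| IfElse (c p q : cmd).

Inductive outcome := Ok (G : hgraph) | Failed | Broke (G : hgraph).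

(* Each command step costs 1 (control overhead); undoing the changes of a
   failed/probed condition is charged at most the cost of that condition
   (hence the factor 2). Divergence = no derivation. *)
Inductive exec : cmd -> hgraph -> outcome -> nat -> Prop :=
| ex_call rs G o c :
    call_rules rs G = (o, c) ->
    exec (Call rs) G (match o with Some G' => Ok G' | None => Failed end) (c + 1)
| ex_skip G : exec Skip G (Ok G) 1
| ex_fail G : exec Fail G Failed 1
| ex_break G : exec Break G (Broke G) 1
| ex_seq_ok c1 c2 G G' o k1 k2 :
    exec c1 G (Ok G') k1 -> exec c2 G' o k2 -> exec (Seq c1 c2) G o (k1 + k2 + 1)
| ex_seq_fail c1 c2 G k1 :
    exec c1 G Failed k1 -> exec (Seq c1 c2) G Failed (k1 + 1)
| ex_seq_break c1 c2 G G' k1 :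
    exec c1 G (Broke G') k1 -> exec (Seq c1 c2) G (Broke G') (k1 + 1)
| ex_loop_ok c G G' o k1 k2 :
    exec c G (Ok G') k1 -> exec (Loop c) G' o k2 -> exec (Loop c) G o (k1 + k2 + 1)
| ex_loop_fail c G k1 :
    exec c G Failed k1 -> exec (Loop c) G (Ok G) (2 * k1 + 1)
| ex_loop_break c G G' k1 :
    exec c G (Broke G') k1 -> exec (Loop c) G (Ok G') (k1 + 1)
| ex_try_ok c p q G G' o k1 k2 :
    exec c G (Ok G') k1 -> exec p G' o k2 -> exec (TryElse c p q) G o (k1 + k2 + 1)
| ex_try_fail c p q G o k1 k2 :
    exec c G Failed k1 -> exec q G o k2 -> exec (TryElse c p q) G o (2 * k1 + k2 + 1)
| ex_try_break c p q G G' k1 :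
    exec c G (Broke G') k1 -> exec (TryElse c p q) G (Broke G') (k1 + 1)
| ex_if_ok c p q G G' o k1 k2 :
    exec c G (Ok G') k1 -> exec p G o k2 -> exec (IfElse c p q) G o (2 * k1 + k2 + 1)
| ex_if_fail c p q G o k1 k2 :
    exec c G Failed k1 -> exec q G o k2 -> exec (IfElse c p q) G o (2 * k1 + k2 + 1)
| ex_if_break c p q G G' k1 :
    exec c G (Broke G') k1 -> exec (IfElse c p q) G (Broke G') (k1 + 1).

(* DFS = try next_edge then (try {move, ignore} else (set_flag; break))
                        else (try loop; try back else break) *)
Definition DFS : cmd :=
  TryElse (Call [r_next_edge])
          (TryElse (Call [r_move; r_ignore]) Skip (Seq (Call [r_set_flag]) Break))
          (Seq (TryElse (Call [r_loop]) Skip Skip)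
               (TryElse (Call [r_back]) Skip Break)).

Definition Check : cmd := IfElse (Call [r_flag]) Fail Skip.

(* Main = (init; DFS!; try unroot else break)!; Check *)
Definition is_dag : cmd :=
  Seq (Loop (Seq (Call [r_init])
                 (Seq (Loop DFS) (TryElse (Call [r_unroot]) Skip Break))))
      Check.

(* Throughout the run the graph has at most one root and at most one red edge,
   its grey nodes are not roots, and its dashed edges have distinct non-grey
   targets. Hence every search of the compiler inspects at most one root and then
   at most one candidate edge, or succeeds on the first candidate: each rule call
   costs O(1). The potential 2 #unmarked edges + 2 #grey nodes + #dashed edges is
   at most 3(n+m) and strictly decreases in every iteration of either loop that
   does not end it, so the loops perform O(n+m) iterations in total, the inner
   loop being charged to the potential it consumes. *)

From Stdlib Require Import List Arith Bool Lia.
Import ListNotations.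

Lemma nmark_eqb_eq a b : nmark_eqb a b = true <-> a = b.
Proof. destruct a, b; simpl; split; congruence. Qed.

Lemma emark_eqb_eq a b : emark_eqb a b = true <-> a = b.
Proof. destruct a, b; simpl; split; congruence. Qed.

Lemma upd_eq {A} (f : nat -> A) x a : upd f x a x = a.
Proof. unfold upd. now rewrite Nat.eqb_refl. Qed.

Lemma upd_neq {A} (f : nat -> A) x a y : y <> x -> upd f x a y = f y.
Proof. unfold upd. intros H. now apply Nat.eqb_neq in H as ->. Qed.

Lemma upd_comm {A} (f : nat -> A) x a y b : x <> y ->
  forall z, upd (upd f x a) y b z = upd (upd f y b) x a z.
Proof.
  intros Hxy z. destruct (Nat.eq_dec z x), (Nat.eq_dec z y); subst;
    rewrite ?upd_eq, ?upd_neq, ?upd_eq by auto; congruence.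
Qed.

Definition count_below (p : nat -> bool) (n : nat) : nat := length (filter p (seq 0 n)).

Lemma count_below_S p n : count_below p (S n) = count_below p n + Nat.b2n (p n).
Proof.
  unfold count_below. rewrite seq_S, filter_app, length_app.
  simpl. destruct (p n); simpl; lia.
Qed.

Lemma count_below_le p n : count_below p n <= n.
Proof. induction n; auto. rewrite count_below_S. destruct (p n); simpl; lia. Qed.

Lemma count_below_ext p q n : (forall x, x < n -> p x = q x) -> count_below p n = count_below q n.
Proof.
  induction n; intros H; auto.
  rewrite !count_below_S, IHn by (intros; apply H; lia). now rewrite (H n) by lia.
Qed.

Lemma count_below_upd p q n x : x < n -> (forall y, y <> x -> q y = p y) ->
  count_below q n + Nat.b2n (p x) = count_below p n + Nat.b2n (q x).
Proof.
  induction n; intros Hx H; [lia|].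
  rewrite !count_below_S. destruct (Nat.eq_dec x n).
  - subst. rewrite (count_below_ext q p) by (intros; apply H; lia). lia.
  - rewrite (H n) by auto. specialize (IHn ltac:(lia) H). lia.
Qed.

Lemma NoDup_length_le1 (l : list nat) :
  NoDup l -> (forall x y, In x l -> In y l -> x = y) -> length l <= 1.
Proof.
  destruct l as [|a [|b l]]; simpl; intros Hl H; try lia.
  inversion Hl as [|? ? Ha]; subst. exfalso. apply Ha. left. apply H; simpl; auto.
Qed.

Lemma scan_Some {A B} (l : list A) (chk : A -> option B * nat) b c :
  scan l chk = (Some b, c) -> exists x, In x l /\ fst (chk x) = Some b.
Proof.
  induction l as [|y l IH] in c |- *; simpl; [discriminate|].
  destruct (chk y) as [[r|] c0] eqn:E.
  - intros [= <- _]. exists y. rewrite E. simpl; auto.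
  - destruct (scan l chk) as [r' c'] eqn:E'. intros [= -> _].
    destruct (IH _ eq_refl) as [x [Hx Hx']]. eauto.
Qed.

Lemma scan_cost_short {A B} (l : list A) (chk : A -> option B * nat) a :
  length l <= 1 -> (forall x, In x l -> snd (chk x) <= a) -> snd (scan l chk) <= 2 + a.
Proof.
  destruct l as [|x [|y l]]; simpl; intros Hl H; try lia.
  specialize (H x (or_introl eq_refl)).
  destruct (chk x) as [[r|] c]; simpl in *; lia.
Qed.

Lemma scan_cost_succeed {A B} (l : list A) (chk : A -> option B * nat) a :
  (forall x, In x l -> snd (chk x) <= a /\ fst (chk x) <> None) -> snd (scan l chk) <= 1 + a.
Proof.
  destruct l as [|x l]; simpl; intros H; [lia|].
  destruct (H x (or_introl eq_refl)) as [Hc Hs].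
  destruct (chk x) as [[r|] c]; simpl in *; [lia | congruence].
Qed.

Lemma in_root_list G v : In v (root_list G) <-> v < nnodes G /\ is_root G v = true.
Proof. unfold root_list. rewrite filter_In, in_seq. intuition lia. Qed.

Lemma in_node_list G mu v : In v (node_list G mu) -> v < nnodes G /\ nmark_of G v = mu.
Proof. unfold node_list. rewrite filter_In, in_seq, nmark_eqb_eq. intuition lia. Qed.

Lemma in_out_list G v mu e : In e (out_list G v mu) ->
  e < nedges G /\ src G e = v /\ tgt G e <> v /\ emark_of G e = mu.
Proof.
  unfold out_list. rewrite filter_In, in_seq, !andb_true_iff, negb_true_iff,
    !Nat.eqb_eq, Nat.eqb_neq, emark_eqb_eq. intuition lia.
Qed.

Lemma in_in_list G v mu e : In e (in_list G v mu) ->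
  e < nedges G /\ tgt G e = v /\ src G e <> v /\ emark_of G e = mu.
Proof.
  unfold in_list. rewrite filter_In, in_seq, !andb_true_iff, negb_true_iff,
    !Nat.eqb_eq, Nat.eqb_neq, emark_eqb_eq. intuition lia.
Qed.

Lemma in_loop_list G v mu e : In e (loop_list G v mu) ->
  e < nedges G /\ src G e = v /\ tgt G e = v /\ emark_of G e = mu.
Proof.
  unfold loop_list. rewrite filter_In, in_seq, !andb_true_iff, !Nat.eqb_eq, emark_eqb_eq.
  intuition lia.
Qed.
Lemma nnodes_set_node G v mu r : nnodes (set_node G v mu r) = nnodes G. Proof. reflexivity. Qed.
Lemma nedges_set_node G v mu r : nedges (set_node G v mu r) = nedges G. Proof. reflexivity. Qed.
Lemma src_set_node G v mu r : src (set_node G v mu r) = src G. Proof. reflexivity. Qed.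
Lemma tgt_set_node G v mu r : tgt (set_node G v mu r) = tgt G. Proof. reflexivity. Qed.
Lemma nmark_of_set_node G v mu r : nmark_of (set_node G v mu r) = upd (nmark_of G) v mu.
Proof. reflexivity. Qed.
Lemma is_root_set_node G v mu r : is_root (set_node G v mu r) = upd (is_root G) v r.
Proof. reflexivity. Qed.
Lemma emark_of_set_node G v mu r : emark_of (set_node G v mu r) = emark_of G.
Proof. reflexivity. Qed.
Lemma nnodes_set_edge G e mu : nnodes (set_edge G e mu) = nnodes G. Proof. reflexivity. Qed.
Lemma nedges_set_edge G e mu : nedges (set_edge G e mu) = nedges G. Proof. reflexivity. Qed.
Lemma src_set_edge G e mu : src (set_edge G e mu) = src G. Proof. reflexivity. Qed.
Lemma tgt_set_edge G e mu : tgt (set_edge G e mu) = tgt G. Proof. reflexivity. Qed.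
Lemma nmark_of_set_edge G e mu : nmark_of (set_edge G e mu) = nmark_of G. Proof. reflexivity. Qed.
Lemma is_root_set_edge G e mu : is_root (set_edge G e mu) = is_root G. Proof. reflexivity. Qed.
Lemma emark_of_set_edge G e mu : emark_of (set_edge G e mu) = upd (emark_of G) e mu.
Proof. reflexivity. Qed.

#[local] Hint Rewrite nnodes_set_node nedges_set_node src_set_node tgt_set_node
  nmark_of_set_node is_root_set_node emark_of_set_node nnodes_set_edge nedges_set_edge
  src_set_edge tgt_set_edge nmark_of_set_edge is_root_set_edge emark_of_set_edge : graph.

(** * The invariant and the potential *)

(* The dashed edges form the stack of the depth-first search, so they have
   distinct targets, none of them grey. *)
Record inv (G : hgraph) : Prop := {
  inv_wf : wf_graph G;
  inv_root_unique : forall u v, u < nnodes G -> v < nnodes G ->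
    is_root G u = true -> is_root G v = true -> u = v;
  inv_grey_not_root : forall v, v < nnodes G -> nmark_of G v = NGrey -> is_root G v = false;
  inv_dashed_tgt_inj : forall i j, i < nedges G -> j < nedges G ->
    emark_of G i = EDashed -> emark_of G j = EDashed -> tgt G i = tgt G j -> i = j;
  inv_dashed_tgt_not_grey : forall i, i < nedges G -> emark_of G i = EDashed ->
    nmark_of G (tgt G i) <> NGrey;
  inv_red_unique : forall i j, i < nedges G -> j < nedges G ->
    emark_of G i = ERed -> emark_of G j = ERed -> i = j }.

Definition no_root G := forall v, v < nnodes G -> is_root G v = false.
Definition no_red_edge G := forall i, i < nedges G -> emark_of G i <> ERed.
Definition no_red_root G := forall v, v < nnodes G -> is_root G v = true -> nmark_of G v <> NRed.

(* Between iterations of DFS, the red edge created by next_edge has been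
   consumed by move or ignore, unless set_flag turned the root green. *)
Definition dfs_inv G := inv G /\ (no_red_edge G \/ no_red_root G).
Definition outer_inv G := inv G /\ no_root G /\ no_red_edge G.

(* next_edge consumes an unmarked edge (-2), init a grey node (-2), move a grey
   node while creating a dashed edge (-2+1), and back a dashed edge (-1). *)
Definition potential (G : hgraph) : nat :=
  2 * count_below (fun i => emark_eqb (emark_of G i) EUnmarked) (nedges G)
  + 2 * count_below (fun v => nmark_eqb (nmark_of G v) NGrey) (nnodes G)
  + count_below (fun i => emark_eqb (emark_of G i) EDashed) (nedges G).

Lemma potential_le G : potential G <= 3 * (nnodes G + nedges G).
Proof.
  unfold potential.
  pose proof (count_below_le (fun i => emark_eqb (emark_of G i) EUnmarked) (nedges G)).
  pose proof (count_below_le (fun v => nmark_eqb (nmark_of G v) NGrey) (nnodes G)).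
  pose proof (count_below_le (fun i => emark_eqb (emark_of G i) EDashed) (nedges G)).
  lia.
Qed.

Lemma potential_set_node G v mu r : v < nnodes G ->
  potential (set_node G v mu r) + 2 * Nat.b2n (nmark_eqb (nmark_of G v) NGrey)
  = potential G + 2 * Nat.b2n (nmark_eqb mu NGrey).
Proof.
  intros Hv. unfold potential. autorewrite with graph.
  pose proof (count_below_upd (fun x => nmark_eqb (nmark_of G x) NGrey)
    (fun x => nmark_eqb (upd (nmark_of G) v mu x) NGrey) (nnodes G) v Hv) as H.
  cbv beta in H. rewrite upd_eq in H. specialize (H ltac:(intros; now rewrite upd_neq)). lia.
Qed.

Lemma potential_set_edge G e mu : e < nedges G ->
  potential (set_edge G e mu) + 2 * Nat.b2n (emark_eqb (emark_of G e) EUnmarked)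
    + Nat.b2n (emark_eqb (emark_of G e) EDashed)
  = potential G + 2 * Nat.b2n (emark_eqb mu EUnmarked) + Nat.b2n (emark_eqb mu EDashed).
Proof.
  intros He. unfold potential. autorewrite with graph.
  pose proof (count_below_upd (fun x => emark_eqb (emark_of G x) EUnmarked)
    (fun x => emark_eqb (upd (emark_of G) e mu x) EUnmarked) (nedges G) e He) as H1.
  pose proof (count_below_upd (fun x => emark_eqb (emark_of G x) EDashed)
    (fun x => emark_eqb (upd (emark_of G) e mu x) EDashed) (nedges G) e He) as H2.
  cbv beta in H1, H2. rewrite upd_eq in H1, H2.
  specialize (H1 ltac:(intros; now rewrite upd_neq)).
  specialize (H2 ltac:(intros; now rewrite upd_neq)). lia.
Qed.

Lemma inv_other_not_root G u v : inv G -> u < nnodes G -> v < nnodes G ->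
  is_root G v = true -> u <> v -> is_root G u = false.
Proof.
  intros HG Hu Hv Hr Huv. destruct (is_root G u) eqn:E; auto.
  exfalso. apply Huv. eapply inv_root_unique; eauto.
Qed.

Lemma inv_ext G G' :
  nnodes G' = nnodes G -> edges G' = edges G ->
  (forall v, nmark_of G' v = nmark_of G v) -> (forall v, is_root G' v = is_root G v) ->
  (forall i, emark_of G' i = emark_of G i) -> inv G -> inv G'.
Proof.
  intros Hn Hed Hm Hr He [Hwf Hroot Hgrey Hinj Hng Hred].
  assert (Hs : src G' = src G) by (unfold src; now rewrite Hed).
  assert (Ht : tgt G' = tgt G) by (unfold tgt; now rewrite Hed).
  assert (Hne : nedges G' = nedges G) by (unfold nedges; now rewrite Hed).
  unfold wf_graph in *. constructor; unfold wf_graph; rewrite ?Hn, ?Hne, ?Hs, ?Ht; intros *;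
    rewrite ?Hm, ?Hr, ?He; eauto.
Qed.

Lemma inv_set_node G v mu r :
  inv G -> v < nnodes G -> mu <> NGrey ->
  (r = true -> forall u, u < nnodes G -> u <> v -> is_root G u = false) ->
  inv (set_node G v mu r).
Proof.
  intros HG Hv Hmu Hr. constructor; autorewrite with graph.
  - exact (inv_wf _ HG).
  - intros u w Hu Hw.
    destruct (Nat.eq_dec u v), (Nat.eq_dec w v); subst; rewrite ?upd_eq, ?upd_neq by auto;
      intros H1 H2; auto.
    + now rewrite Hr in H2.
    + now rewrite Hr in H1.
    + eapply inv_root_unique; eauto.
  - intros u Hu. destruct (Nat.eq_dec u v); subst; rewrite ?upd_eq, ?upd_neq by auto.
    + congruence.
    + apply (inv_grey_not_root _ HG); auto.
  - exact (inv_dashed_tgt_inj _ HG).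
  - intros i Hi Hd. destruct (Nat.eq_dec (tgt G i) v) as [E|E].
    + now rewrite E, upd_eq.
    + rewrite upd_neq by auto. apply (inv_dashed_tgt_not_grey _ HG); auto.
  - exact (inv_red_unique _ HG).
Qed.

Lemma inv_set_edge G e mu :
  inv G -> e < nedges G ->
  (mu = ERed -> forall j, j < nedges G -> j <> e -> emark_of G j <> ERed) ->
  (mu = EDashed -> nmark_of G (tgt G e) <> NGrey /\
     forall j, j < nedges G -> j <> e -> emark_of G j = EDashed -> tgt G j <> tgt G e) ->
  inv (set_edge G e mu).
Proof.
  intros HG He Hr Hd. constructor; autorewrite with graph.
  - exact (inv_wf _ HG).
  - exact (inv_root_unique _ HG).
  - exact (inv_grey_not_root _ HG).
  - intros i j Hi Hj.
    destruct (Nat.eq_dec i e), (Nat.eq_dec j e); subst; rewrite ?upd_eq, ?upd_neq by auto;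
      intros H1 H2 H3; auto.
    + exfalso. apply (proj2 (Hd H1) j); auto.
    + exfalso. apply (proj2 (Hd H2) i); auto.
    + eapply inv_dashed_tgt_inj; eauto.
  - intros i Hi. destruct (Nat.eq_dec i e); subst; rewrite ?upd_eq, ?upd_neq by auto.
    + intros H. apply (Hd H).
    + apply (inv_dashed_tgt_not_grey _ HG); auto.
  - intros i j Hi Hj.
    destruct (Nat.eq_dec i e), (Nat.eq_dec j e); subst; rewrite ?upd_eq, ?upd_neq by auto;
      intros H1 H2; auto.
    + exfalso. apply (Hr H1 j); auto.
    + exfalso. apply (Hr H2 i); auto.
    + eapply inv_red_unique; eauto.
Qed.

(** * Cost of a rule call *)

Lemma root_list_short G : inv G -> length (root_list G) <= 1.
Proof.
  intros HG. apply NoDup_length_le1; [apply NoDup_filter, seq_NoDup|].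
  intros u v Hu Hv. apply in_root_list in Hu, Hv. eapply inv_root_unique; intuition eauto.
Qed.

Lemma red_out_list_short G v : inv G -> length (out_list G v ERed) <= 1.
Proof.
  intros HG. apply NoDup_length_le1; [apply NoDup_filter, seq_NoDup|].
  intros i j Hi Hj. apply in_out_list in Hi, Hj. eapply inv_red_unique; intuition eauto.
Qed.

Lemma dashed_in_list_short G v : inv G -> length (in_list G v EDashed) <= 1.
Proof.
  intros HG. apply NoDup_length_le1; [apply NoDup_filter, seq_NoDup|].
  intros i j Hi Hj. apply in_in_list in Hi, Hj.
  eapply inv_dashed_tgt_inj; intuition (eauto; congruence).
Qed.

Lemma root_of_mark_Some G mu v c : root_of_mark G mu = (Some v, c) ->
  v < nnodes G /\ is_root G v = true /\ nmark_of G v = mu.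
Proof.
  unfold root_of_mark. intros H. apply scan_Some in H as [x [Hx H]]. simpl in H.
  apply in_root_list in Hx.
  destruct (nmark_eqb (nmark_of G x) mu) eqn:E; [|discriminate].
  injection H as <-. apply nmark_eqb_eq in E. tauto.
Qed.

Lemma root_edge_search_Some G lst emu ok e c :
  root_edge_search G lst emu ok = (Some e, c) ->
  exists v, v < nnodes G /\ is_root G v = true /\ nmark_of G v = NRed /\
    In e (lst G v emu) /\ ok v e = true.
Proof.
  unfold root_edge_search. intros H. apply scan_Some in H as [v [Hv H]].
  apply in_root_list in Hv as [Hv Hr]. exists v.
  destruct (is_red G v) eqn:Ered; [|discriminate].
  destruct (scan (lst G v emu) _) as [o c0] eqn:E. simpl in H. subst o.
  apply scan_Some in E as [x [Hx Hx']]. simpl in Hx'.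
  destruct (ok v x) eqn:Eok; [|discriminate]. injection Hx' as <-.
  apply nmark_eqb_eq in Ered. auto.
Qed.

Lemma root_of_mark_cost G mu : inv G -> snd (root_of_mark G mu) <= 3.
Proof.
  intros HG. apply (scan_cost_short _ _ 1); [now apply root_list_short|].
  intros v _. destruct (nmark_eqb _ _); simpl; lia.
Qed.

Lemma root_edge_search_cost G lst emu ok : inv G ->
  (forall v, In v (root_list G) ->
     length (lst G v emu) <= 1 \/ forall e, In e (lst G v emu) -> ok v e = true) ->
  snd (root_edge_search G lst emu ok) <= 6.
Proof.
  intros HG Hlst. apply (scan_cost_short _ _ 4); [now apply root_list_short|].
  intros v Hv. destruct (is_red G v); simpl; [|lia].
  destruct (scan (lst G v emu) _) as [o c] eqn:E. simpl.
  enough (c <= 3) by lia.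
  change c with (snd (o, c)). rewrite <- E.
  destruct (Hlst v Hv) as [Hshort | Hall].
  - apply (scan_cost_short _ _ 1); auto.
  - enough (snd (scan (lst G v emu) (fun e => (if ok v e then Some e else None, 1))) <= 2)
      by lia.
    apply scan_cost_succeed. intros e He. rewrite (Hall e He). simpl. split; [lia | discriminate].
Qed.

Lemma rule_step_cost r G : inv G -> snd (rule_step r G) <= 7.
Proof.
  intros HG.
  assert (Hres : forall lst emu ok,
    (forall v, In v (root_list G) ->
       length (lst G v emu) <= 1 \/ forall e, In e (lst G v emu) -> ok v e = true) ->
    snd (root_edge_search G lst emu ok) <= 6) by (intros; now apply root_edge_search_cost).
  assert (Hinit : snd (scan (node_list G NGrey)
      (fun v => (if negb (is_root G v) then Some v else None, 1))) <= 2).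
  { apply scan_cost_succeed. intros v Hv. apply in_node_list in Hv as [Hv Hg].
    rewrite (inv_grey_not_root _ HG v) by auto. simpl. split; [lia | discriminate]. }
  pose proof (root_of_mark_cost G NRed HG).
  pose proof (root_of_mark_cost G NGreen HG).
  destruct r; unfold rule_step;
  match goal with
  | |- context [root_edge_search G ?lst ?emu ?ok] =>
      assert (snd (root_edge_search G lst emu ok) <= 6);
      [ apply Hres; intros v _;
        first [ left; now apply red_out_list_short | left; now apply dashed_in_list_short
              | right; intros e He ]
      | destruct (root_edge_search G lst emu ok) as [[?|] ?] ]
  | |- context [root_of_mark G ?mu] => destruct (root_of_mark G mu) as [[?|] ?]
  | |- context [scan (node_list G NGrey) ?chk] =>
      destruct (scan (node_list G NGrey) chk) as [[?|] ?]
  end; simpl in *; try lia.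
  (* next_edge: out_list contains no loops, so its first candidate matches *)
  apply in_out_list in He. apply negb_true_iff, Nat.eqb_neq. tauto.
Qed.

(** * Effect of the rules *)

Lemma dfs_inv_red_root G v : dfs_inv G -> v < nnodes G -> is_root G v = true ->
  nmark_of G v = NRed -> no_red_edge G.
Proof. intros [_ [H | H]] Hv Hr Hred; [exact H | now destruct (H v Hv Hr)]. Qed.

Lemma no_red_edge_set_edge G e mu : inv G -> e < nedges G -> emark_of G e = ERed ->
  mu <> ERed -> no_red_edge (set_edge G e mu).
Proof.
  intros HG He Hred Hmu i Hi. autorewrite with graph in *.
  destruct (Nat.eq_dec i e) as [-> | Hie]; [now rewrite upd_eq|].
  rewrite upd_neq by auto. intros E. apply Hie. eapply inv_red_unique; eauto.
Qed.

Lemma init_step G G' : outer_inv G -> fst (rule_step r_init G) = Some G' ->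
  dfs_inv G' /\ potential G' < potential G.
Proof.
  intros [HG [Hnoroot Hnored]]. unfold rule_step.
  destruct (scan _ _) as [[v|] c] eqn:Hs; [intros [= <-] | discriminate].
  apply scan_Some in Hs as [x [Hx Hv]]. simpl in Hv.
  destruct (negb (is_root G x)); [injection Hv as -> | discriminate].
  apply in_node_list in Hx as [Hv Hgrey].
  split; [split|].
  - apply inv_set_node; [exact HG | exact Hv | discriminate | auto].
  - left. exact Hnored.
  - pose proof (potential_set_node G v NRed true Hv) as H. rewrite Hgrey in H. simpl in H. lia.
Qed.

Lemma unroot_step G G' : dfs_inv G -> fst (rule_step r_unroot G) = Some G' ->
  outer_inv G' /\ potential G' <= potential G.
Proof.
  intros HG. unfold rule_step.
  destruct (root_of_mark G NRed) as [[v|] c] eqn:Hs; [intros [= <-] | discriminate].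
  apply root_of_mark_Some in Hs as [Hv [Hr Hred]].
  split; [split; [|split]|].
  - apply inv_set_node; [exact (proj1 HG) | exact Hv | discriminate | discriminate].
  - intros u Hu. autorewrite with graph.
    destruct (Nat.eq_dec u v) as [-> | Huv]; [now rewrite upd_eq|].
    rewrite upd_neq by auto. now apply (inv_other_not_root G u v (proj1 HG)).
  - exact (dfs_inv_red_root G v HG Hv Hr Hred).
  - pose proof (potential_set_node G v NBlue false Hv) as H. rewrite Hred in H. simpl in H. lia.
Qed.

Lemma green_root_dfs_inv G v : inv G -> v < nnodes G -> is_root G v = true ->
  dfs_inv (set_node G v NGreen true) /\ potential (set_node G v NGreen true) <= potential G.
Proof.
  intros HG Hv Hr. split; [split|].
  - apply inv_set_node; [exact HG | exact Hv | discriminate |].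
    intros _ u Hu Huv. now apply (inv_other_not_root G u v).
  - right. intros u Hu. autorewrite with graph.
    destruct (Nat.eq_dec u v) as [-> | Huv]; [intros _; rewrite upd_eq; discriminate|].
    rewrite !upd_neq by auto. rewrite (inv_other_not_root G u v) by auto. discriminate.
  - pose proof (potential_set_node G v NGreen true Hv) as H. simpl in H. lia.
Qed.

Lemma set_flag_step G G' : inv G -> fst (rule_step r_set_flag G) = Some G' ->
  dfs_inv G' /\ potential G' <= potential G.
Proof.
  intros HG. unfold rule_step.
  destruct (root_of_mark G NRed) as [[v|] c] eqn:Hs; [intros [= <-] | discriminate].
  apply root_of_mark_Some in Hs as [Hv [Hr _]]. now apply green_root_dfs_inv.
Qed.

Lemma loop_step G G' : inv G -> fst (rule_step r_loop G) = Some G' ->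
  dfs_inv G' /\ potential G' <= potential G.
Proof.
  intros HG. unfold rule_step.
  destruct (root_edge_search _ _ _ _) as [[e|] c] eqn:Hs; [intros [= <-] | discriminate].
  apply root_edge_search_Some in Hs as [v [Hv [Hr [_ [He _]]]]].
  apply in_loop_list in He as [_ [-> _]]. now apply green_root_dfs_inv.
Qed.

Lemma next_edge_step G G' : dfs_inv G -> fst (rule_step r_next_edge G) = Some G' ->
  inv G' /\ potential G' < potential G.
Proof.
  intros HG. unfold rule_step.
  destruct (root_edge_search _ _ _ _) as [[e|] c] eqn:Hs; [intros [= <-] | discriminate].
  apply root_edge_search_Some in Hs as [v [Hv [Hr [Hred [He _]]]]].
  apply in_out_list in He as [He [_ [_ Hm]]].
  pose proof (dfs_inv_red_root G v HG Hv Hr Hred) as Hnored.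
  split.
  - apply inv_set_edge; [apply HG | auto | | discriminate].
    intros _ j Hj _. auto.
  - pose proof (potential_set_edge G e ERed He) as H. rewrite Hm in H. simpl in H. lia.
Qed.

Lemma ignore_step G G' : inv G -> fst (rule_step r_ignore G) = Some G' ->
  dfs_inv G' /\ potential G' <= potential G.
Proof.
  intros HG. unfold rule_step.
  destruct (root_edge_search _ _ _ _) as [[e|] c] eqn:Hs; [intros [= <-] | discriminate].
  apply root_edge_search_Some in Hs as [v [_ [_ [_ [He _]]]]].
  apply in_out_list in He as [He [_ [_ Hm]]].
  split; [split|].
  - apply inv_set_edge; auto; discriminate.
  - left. apply no_red_edge_set_edge; auto. discriminate.
  - pose proof (potential_set_edge G e EBlue He) as H. rewrite Hm in H. simpl in H. lia.
Qed.

Lemma move_step G G' : inv G -> fst (rule_step r_move G) = Some G' ->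
  dfs_inv G' /\ potential G' < potential G.
Proof.
  intros HG. unfold rule_step.
  destruct (root_edge_search _ _ _ _) as [[e|] c] eqn:Hs; [intros [= <-] | discriminate].
  apply root_edge_search_Some in Hs as [v [Hv [Hr [Hred [He Hok]]]]].
  apply in_out_list in He as [He [Hsrc [Hloop Hm]]]. subst v.
  apply andb_prop in Hok as [Hok _]. apply andb_prop in Hok as [_ Hgrey].
  apply nmark_eqb_eq in Hgrey.
  destruct (inv_wf _ HG e He) as [Hs Ht].
  set (G1 := set_node G (src G e) NRed false).
  set (G2 := set_node G1 (tgt G e) NRed true).
  assert (HG1 : inv G1) by (apply inv_set_node; auto; discriminate).
  assert (HG2 : inv G2).
  { apply inv_set_node; auto; [discriminate|]. intros _ u Hu Hut. unfold G1. autorewrite with graph.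
    destruct (Nat.eq_dec u (src G e)) as [-> | Hus]; [apply upd_eq|].
    rewrite upd_neq by auto. now apply (inv_other_not_root G u (src G e)). }
  split; [split|].
  - apply inv_set_edge; auto; [discriminate|]. intros _. unfold G2, G1. autorewrite with graph.
    rewrite upd_eq. split; [discriminate|].
    intros j Hj _ Hd Htj. apply (inv_dashed_tgt_not_grey _ HG j); auto. now rewrite Htj.
  - left. apply no_red_edge_set_edge; auto. discriminate.
  - pose proof (potential_set_edge G2 e EDashed He) as H2. simpl in H2.
    pose proof (potential_set_node G1 (tgt G e) NRed true Ht) as H1. unfold G1 in H1.
    autorewrite with graph in H1. rewrite upd_neq, Hgrey in H1 by auto. simpl in H1.
    pose proof (potential_set_node G (src G e) NRed false Hs) as H0. rewrite Hred in H0.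
    simpl in H0. fold G1 in H0, H1. fold G2 in H1, H2. rewrite Hm in H2. simpl in H2. lia.
Qed.

Lemma back_step G G' : dfs_inv G -> fst (rule_step r_back G) = Some G' ->
  dfs_inv G' /\ potential G' < potential G.
Proof.
  intros HG. unfold rule_step.
  destruct (root_edge_search _ _ _ _) as [[e|] c] eqn:Hs; [intros [= <-] | discriminate].
  apply root_edge_search_Some in Hs as [v [Hv [Hr [Hred [He Hok]]]]].
  apply in_in_list in He as [He [Htgt [Hloop Hm]]]. subst v.
  apply andb_prop in Hok as [Hok Hsnr]. apply andb_prop in Hok as [_ Hsred].
  apply nmark_eqb_eq in Hsred. apply negb_true_iff in Hsnr.
  pose proof (dfs_inv_red_root G _ HG Hv Hr Hred) as Hnored.
  destruct HG as [HG _]. destruct (inv_wf _ HG e He) as [Hs Ht].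
  set (G1 := set_node G (src G e) NRed true).
  set (G2 := set_node G1 (tgt G e) NBlue false).
  (* Unrooting tgt e before rooting src e keeps the root unique at every step;
     the two node updates commute. *)
  assert (HG2 : inv G2).
  { set (F1 := set_node G (tgt G e) NBlue false).
    assert (HF1 : inv F1) by (apply inv_set_node; auto; discriminate).
    set (F2 := set_node F1 (src G e) NRed true).
    assert (HF2 : inv F2).
    { apply inv_set_node; auto; [discriminate|]. intros _ u Hu Hus. unfold F1.
      autorewrite with graph. destruct (Nat.eq_dec u (tgt G e)) as [-> | Hut]; [apply upd_eq|].
      rewrite upd_neq by auto. now apply (inv_other_not_root G u (tgt G e)). }
    refine (inv_ext F2 G2 eq_refl eq_refl _ _ (fun _ => eq_refl) HF2);
      intros v; apply upd_comm, Hloop. }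
  split; [split|].
  - apply inv_set_edge; auto; discriminate.
  - left. intros i Hi. autorewrite with graph.
    destruct (Nat.eq_dec i e) as [-> | Hie]; [rewrite upd_eq; discriminate|].
    rewrite upd_neq by auto. now apply Hnored.
  - pose proof (potential_set_edge G2 e EBlue He) as H2. simpl in H2.
    pose proof (potential_set_node G1 (tgt G e) NBlue false Ht) as H1. unfold G1 in H1.
    autorewrite with graph in H1. rewrite upd_neq, Hred in H1 by auto. simpl in H1.
    pose proof (potential_set_node G (src G e) NRed true Hs) as H0. rewrite Hsred in H0.
    simpl in H0. fold G1 in H0, H1. fold G2 in H1, H2. rewrite Hm in H2. simpl in H2. lia.
Qed.

(** * Commands *)

Lemma call_rules_cost rs G a : (forall r, In r rs -> snd (rule_step r G) <= a) ->
  snd (call_rules rs G) <= a * length rs.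
Proof.
  induction rs as [|r rs IH]; simpl; intros H; [lia|].
  pose proof (H r (or_introl eq_refl)).
  specialize (IH (fun r' Hr' => H r' (or_intror Hr'))).
  destruct (rule_step r G) as [[G'|] c]; simpl in *; [lia|].
  destruct (call_rules rs G) as [o c']; simpl in *; lia.
Qed.

Lemma call_rules_Some rs G G' : fst (call_rules rs G) = Some G' ->
  exists r, In r rs /\ fst (rule_step r G) = Some G'.
Proof.
  induction rs as [|r rs IH]; simpl; [discriminate|].
  destruct (rule_step r G) as [[G1|] c] eqn:E; simpl.
  - intros [= ->]. exists r. rewrite E. simpl; auto.
  - destruct (call_rules rs G) as [o c'] eqn:E'. simpl. intros Ho.
    destruct (IH Ho) as [r' [Hr' H']]. eauto.
Qed.

Lemma exec_Call_spec rs G o k : inv G -> exec (Call rs) G o k ->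
  k <= 7 * length rs + 1 /\
  (o = Failed \/ exists r G', In r rs /\ fst (rule_step r G) = Some G' /\ o = Ok G').
Proof.
  intros HG H. inversion H as [? ? oo c Hcall | | | | | | | | | | | | | | |]; subst.
  pose proof (call_rules_cost rs G 7 (fun r _ => rule_step_cost r G HG)) as Hc.
  pose proof (call_rules_Some rs G) as HS.
  rewrite Hcall in Hc, HS. simpl in *. split; [lia|].
  destruct oo as [G'|]; [right | now left].
  destruct (HS G' eq_refl) as [r [Hr H']]. eauto.
Qed.

Lemma exec_Call_not_Broke rs G G' k : ~ exec (Call rs) G (Broke G') k.
Proof. intros H. inversion H as [? ? [] | | | | | | | | | | | | | | |]; discriminate. Qed.

Lemma exec_Skip_inv G o k : exec Skip G o k -> o = Ok G /\ k = 1.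
Proof. intros H; inversion H; auto. Qed.

Lemma exec_Break_inv G o k : exec Break G o k -> o = Broke G /\ k = 1.
Proof. intros H; inversion H; auto. Qed.

Lemma exec_Fail_inv G o k : exec Fail G o k -> o = Failed /\ k = 1.
Proof. intros H; inversion H; auto. Qed.

Lemma exec_Seq_inv c1 c2 G o k : exec (Seq c1 c2) G o k ->
  (exists G1 k1 k2, exec c1 G (Ok G1) k1 /\ exec c2 G1 o k2 /\ k = k1 + k2 + 1) \/
  (exists k1, exec c1 G Failed k1 /\ o = Failed /\ k = k1 + 1) \/
  (exists G1 k1, exec c1 G (Broke G1) k1 /\ o = Broke G1 /\ k = k1 + 1).
Proof. intros H; inversion H; subst; eauto 10. Qed.

Lemma exec_TryElse_inv c p q G o k : exec (TryElse c p q) G o k ->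
  (exists G1 k1 k2, exec c G (Ok G1) k1 /\ exec p G1 o k2 /\ k = k1 + k2 + 1) \/
  (exists k1 k2, exec c G Failed k1 /\ exec q G o k2 /\ k = 2 * k1 + k2 + 1) \/
  (exists G1 k1, exec c G (Broke G1) k1 /\ o = Broke G1 /\ k = k1 + 1).
Proof. intros H; inversion H; subst; eauto 10. Qed.

Lemma exec_IfElse_inv c p q G o k : exec (IfElse c p q) G o k ->
  (exists G1 k1 k2, exec c G (Ok G1) k1 /\ exec p G o k2 /\ k = 2 * k1 + k2 + 1) \/
  (exists k1 k2, exec c G Failed k1 /\ exec q G o k2 /\ k = 2 * k1 + k2 + 1) \/
  (exists G1 k1, exec c G (Broke G1) k1 /\ o = Broke G1 /\ k = k1 + 1).
Proof. intros H; inversion H; subst; eauto 10. Qed.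

Lemma exec_try_Call_inv rs q G o k : inv G -> exec (TryElse (Call rs) Skip q) G o k ->
  (exists r G', In r rs /\ fst (rule_step r G) = Some G' /\ o = Ok G' /\
     k <= 7 * length rs + 3) \/
  (exists k2, exec q G o k2 /\ k <= 14 * length rs + k2 + 3).
Proof.
  intros HG H.
  apply exec_TryElse_inv in H
    as [[G1 [k1 [k2 [H1 [H2 ->]]]]] | [[k1 [k2 [H1 [H2 ->]]]] | [G1 [k1 [H1 _]]]]].
  - apply exec_Call_spec in H1 as [Hk1 [[=] | [r [G' [Hr [Hstep [= <-]]]]]]]; [|exact HG].
    apply exec_Skip_inv in H2 as [-> ->]. left. exists r, G1. repeat split; auto; lia.
  - apply exec_Call_spec in H1 as [Hk1 _]; [|exact HG]. right. exists k2. split; auto; lia.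
  - now apply exec_Call_not_Broke in H1.
Qed.

Fixpoint loop_free (c : cmd) : Prop :=
  match c with
  | Loop _ => False
  | Seq c1 c2 => loop_free c1 /\ loop_free c2
  | TryElse c1 c2 c3 | IfElse c1 c2 c3 => loop_free c1 /\ loop_free c2 /\ loop_free c3
  | Call _ | Skip | Fail | Break => True
  end.

Lemma exec_loop_free_total c G : loop_free c -> exists o k, exec c G o k.
Proof.
  induction c in G |- *; simpl; intros Hc.
  - destruct (call_rules rs G) eqn:E. eexists; eexists. apply ex_call. eassumption.
  - eexists; eexists. constructor.
  - eexists; eexists. constructor.
  - eexists; eexists. constructor.
  - destruct Hc as [H1 H2]. destruct (IHc1 G H1) as [[G1 | | G1] [k1 E1]].
    + destruct (IHc2 G1 H2) as [o [k2 E2]]. eexists; eexists. eapply ex_seq_ok; eauto.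
    + eexists; eexists. eapply ex_seq_fail; eauto.
    + eexists; eexists. eapply ex_seq_break; eauto.
  - contradiction.
  - destruct Hc as [H1 [H2 H3]]. destruct (IHc1 G H1) as [[G1 | | G1] [k1 E1]].
    + destruct (IHc2 G1 H2) as [o [k2 E2]]. eexists; eexists. eapply ex_try_ok; eauto.
    + destruct (IHc3 G H3) as [o [k2 E2]]. eexists; eexists. eapply ex_try_fail; eauto.
    + eexists; eexists. eapply ex_try_break; eauto.
  - destruct Hc as [H1 [H2 H3]]. destruct (IHc1 G H1) as [[G1 | | G1] [k1 E1]].
    + destruct (IHc2 G H2) as [o [k2 E2]]. eexists; eexists. eapply ex_if_ok; eauto.
    + destruct (IHc3 G H3) as [o [k2 E2]]. eexists; eexists. eapply ex_if_fail; eauto.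
    + eexists; eexists. eapply ex_if_break; eauto.
Qed.

Section PotentialLoop.

Variable phi : hgraph -> nat.

(* The amortised term [a * (phi G - phi G')] admits bodies containing inner loops. *)
Definition loop_body_spec (P Q : hgraph -> Prop) (a b : nat) (c : cmd) : Prop :=
  forall G o k, P G -> exec c G o k ->
  match o with
  | Ok G' => P G' /\ phi G' < phi G /\ k <= a * (phi G - phi G') + b
  | Broke G' => Q G' /\ phi G' <= phi G /\ k <= a * (phi G - phi G') + b
  | Failed => k <= b
  end.

Variables (P Q : hgraph -> Prop) (a b : nat) (c : cmd).
Hypothesis P_Q : forall G, P G -> Q G.
Hypothesis c_spec : loop_body_spec P Q a b c.

Lemma exec_Loop_spec G o k : P G -> exec (Loop c) G o k ->
  exists G', o = Ok G' /\ Q G' /\ phi G' <= phi G /\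
    k <= (a + b + 1) * (phi G - phi G') + 2 * b + 1.
Proof.
  intros HG H. remember (Loop c) as l eqn:El.
  induction H; try discriminate; injection El as ->.
  - destruct (c_spec _ _ _ HG H) as [HG' [Hlt Hk1]].
    destruct (IHexec2 HG' eq_refl) as [G2 [-> [HQ [Hle Hk2]]]].
    exists G2. repeat split; auto; [lia | nia].
  - pose proof (c_spec _ _ _ HG H) as Hk. simpl in Hk. exists G.
    rewrite Nat.sub_diag. repeat split; auto; lia.
  - destruct (c_spec _ _ _ HG H) as [HQ [Hle Hk]]. exists G'. repeat split; auto; nia.
Qed.

Hypothesis c_total : forall G, P G -> exists o k, exec c G o k.

Lemma exec_Loop_total G : P G -> exists o k, exec (Loop c) G o k.
Proof.
  induction G as [G IH] using (induction_ltof1 _ phi). intros HG.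
  destruct (c_total G HG) as [[G1 | | G1] [k1 H1]].
  - destruct (c_spec _ _ _ HG H1) as [HG1 [Hlt _]].
    destruct (IH G1 Hlt HG1) as [o [k2 H2]]. eexists; eexists. eapply ex_loop_ok; eauto.
  - eexists; eexists. eapply ex_loop_fail; eauto.
  - eexists; eexists. eapply ex_loop_break; eauto.
Qed.

End PotentialLoop.

(** * Cost of is-dag *)

Lemma loop_try_spec G o k : dfs_inv G -> exec (TryElse (Call [r_loop]) Skip Skip) G o k ->
  k <= 18 /\ exists G', o = Ok G' /\ dfs_inv G' /\ potential G' <= potential G.
Proof.
  intros HG H.
  apply exec_try_Call_inv in H as [[r [G' [[<- | []] [Hr [-> Hk]]]]] | [k2 [H Hk]]];
    [| | exact (proj1 HG)]; simpl in Hk.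
  - apply loop_step in Hr; [|exact (proj1 HG)]. split; [lia | eauto].
  - apply exec_Skip_inv in H as [-> ->]. split; [lia | eauto].
Qed.

Lemma back_try_spec G o k : dfs_inv G -> exec (TryElse (Call [r_back]) Skip Break) G o k ->
  k <= 18 /\ (o = Broke G \/ exists G', o = Ok G' /\ dfs_inv G' /\ potential G' < potential G).
Proof.
  intros HG H.
  apply exec_try_Call_inv in H as [[r [G' [[<- | []] [Hr [-> Hk]]]]] | [k2 [H Hk]]];
    [| | exact (proj1 HG)]; simpl in Hk.
  - apply back_step in Hr; [|exact HG]. split; [lia | eauto].
  - apply exec_Break_inv in H as [-> ->]. split; [lia | auto].
Qed.

Lemma unroot_try_spec G o k : dfs_inv G -> exec (TryElse (Call [r_unroot]) Skip Break) G o k ->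
  k <= 18 /\ (o = Broke G \/ exists G', o = Ok G' /\ outer_inv G' /\ potential G' <= potential G).
Proof.
  intros HG H.
  apply exec_try_Call_inv in H as [[r [G' [[<- | []] [Hr [-> Hk]]]]] | [k2 [H Hk]]];
    [| | exact (proj1 HG)]; simpl in Hk.
  - apply unroot_step in Hr; [|exact HG]. split; [lia | eauto].
  - apply exec_Break_inv in H as [-> ->]. split; [lia | auto].
Qed.

Lemma move_ignore_try_spec G o k : inv G ->
  exec (TryElse (Call [r_move; r_ignore]) Skip (Seq (Call [r_set_flag]) Break)) G o k ->
  k <= 41 /\ (o = Failed \/
    exists G', (o = Ok G' \/ o = Broke G') /\ dfs_inv G' /\ potential G' <= potential G).
Proof.
  intros HG H.
  apply exec_try_Call_inv in H as [[r [G' [Hr [Hstep [-> Hk]]]]] | [k2 [H Hk]]]; [| |exact HG];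
    simpl in Hk.
  - assert (dfs_inv G' /\ potential G' <= potential G) as [? ?].
    { destruct Hr as [<- | [<- | []]].
      - apply move_step in Hstep as [? ?]; [split; [assumption | lia] | exact HG].
      - now apply ignore_step in Hstep. }
    split; [lia|]. right. eauto.
  - apply exec_Seq_inv in H
      as [[G1 [k3 [k4 [H3 [H4 ->]]]]] | [[k3 [H3 [-> ->]]] | [G1 [k3 [H3 _]]]]].
    + apply exec_Call_spec in H3 as [Hk3 [[=] | [r [G' [[<- | []] [Hstep [= <-]]]]]]];
        [|exact HG].
      apply set_flag_step in Hstep as [? ?]; [|exact HG].
      apply exec_Break_inv in H4 as [-> ->]. simpl in Hk3. split; [lia|]. right. eauto.
    + apply exec_Call_spec in H3 as [Hk3 _]; [|exact HG]. simpl in Hk3. split; [lia | auto].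
    + now apply exec_Call_not_Broke in H3.
Qed.

Lemma DFS_spec : loop_body_spec potential dfs_inv dfs_inv 0 100 DFS.
Proof.
  intros G o k HG H. unfold DFS in H.
  apply exec_TryElse_inv in H
    as [[G1 [k1 [k2 [H1 [H2 ->]]]]] | [[k1 [k2 [H1 [H2 ->]]]] | [G1 [k1 [H1 _]]]]].
  - apply exec_Call_spec in H1 as [Hk1 [[=] | [r [G' [[<- | []] [Hr [= <-]]]]]]];
      [|exact (proj1 HG)].
    apply next_edge_step in Hr as [HG1 Hlt1]; [|exact HG].
    apply move_ignore_try_spec in H2 as [Hk2 [-> | [G2 [[-> | ->] [HG2 Hle2]]]]];
      [..|exact HG1]; simpl in *; intuition lia.
  - apply exec_Call_spec in H1 as [Hk1 _]; [|exact (proj1 HG)].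
    apply exec_Seq_inv in H2
      as [[G1 [k3 [k4 [H3 [H4 ->]]]]] | [[k3 [H3 [-> ->]]] | [G1 [k3 [H3 [-> ->]]]]]];
      apply loop_try_spec in H3 as [Hk3 [G2 [E [HG2 Hle2]]]]; try discriminate; auto.
    injection E as <-.
    apply back_try_spec in H4 as [Hk4 [-> | [G3 [-> [HG3 Hlt3]]]]]; auto;
      simpl in *; intuition lia.
  - now apply exec_Call_not_Broke in H1.
Qed.

Definition dfs_round : cmd :=
  Seq (Call [r_init]) (Seq (Loop DFS) (TryElse (Call [r_unroot]) Skip Break)).

Lemma exec_Loop_DFS_spec G o k : dfs_inv G -> exec (Loop DFS) G o k ->
  exists G', o = Ok G' /\ dfs_inv G' /\ potential G' <= potential G /\
    k <= 101 * (potential G - potential G') + 201.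
Proof.
  intros HG H.
  destruct (exec_Loop_spec potential dfs_inv dfs_inv 0 100 DFS (fun _ H => H) DFS_spec G o k HG H)
    as [G' [-> [HG' [Hle Hk]]]].
  exists G'. do 3 (split; auto). lia.
Qed.

Lemma dfs_round_spec : loop_body_spec potential outer_inv inv 101 300 dfs_round.
Proof.
  intros G o k HG H.
  apply exec_Seq_inv in H
    as [[G1 [k1 [k2 [H1 [H2 ->]]]]] | [[k1 [H1 [-> ->]]] | [G1 [k1 [H1 _]]]]].
  - apply exec_Call_spec in H1 as [Hk1 [[=] | [r [G' [[<- | []] [Hr [= <-]]]]]]];
      [|exact (proj1 HG)].
    apply init_step in Hr as [HG1 Hlt1]; [|exact HG].
    apply exec_Seq_inv in H2
      as [[G2 [k3 [k4 [H3 [H4 ->]]]]] | [[k3 [H3 [-> ->]]] | [G2 [k3 [H3 [-> ->]]]]]];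
      apply exec_Loop_DFS_spec in H3 as [G3 [E [HG3 [Hle3 Hk3]]]]; try discriminate; auto.
    injection E as <-.
    pose proof (proj1 HG3) as Hinv3.
    apply unroot_try_spec in H4 as [Hk4 [-> | [G4 [-> [HG4 Hle4]]]]]; auto;
      simpl in *; intuition lia.
  - apply exec_Call_spec in H1 as [Hk1 _]; [|exact (proj1 HG)]. simpl in *. lia.
  - now apply exec_Call_not_Broke in H1.
Qed.

Lemma Check_cost G o k : inv G -> exec Check G o k -> k <= 18.
Proof.
  intros HG H. unfold Check in H.
  apply exec_IfElse_inv in H
    as [[G1 [k1 [k2 [H1 [H2 ->]]]]] | [[k1 [k2 [H1 [H2 ->]]]] | [G1 [k1 [H1 _]]]]].
  - apply exec_Call_spec in H1 as [Hk1 _]; [|exact HG].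
    apply exec_Fail_inv in H2 as [_ ->]. simpl in Hk1. lia.
  - apply exec_Call_spec in H1 as [Hk1 _]; [|exact HG].
    apply exec_Skip_inv in H2 as [_ ->]. simpl in Hk1. lia.
  - now apply exec_Call_not_Broke in H1.
Qed.

Lemma dfs_round_total G : outer_inv G -> exists o k, exec dfs_round G o k.
Proof.
  intros HG. destruct (exec_loop_free_total (Call [r_init]) G I) as [o1 [k1 H1]].
  pose proof H1 as Hinit. apply exec_Call_spec in Hinit as [_ [-> | [r [G1 [[<- | []] [Hr ->]]]]]];
    [| |exact (proj1 HG)].
  - eexists; eexists. eapply ex_seq_fail; eauto.
  - apply init_step in Hr as [HG1 _]; [|exact HG].
    destruct (exec_Loop_total potential dfs_inv dfs_inv 0 100 DFS DFS_spec
      (fun G _ => exec_loop_free_total DFS G ltac:(simpl; tauto)) G1 HG1) as [o2 [k2 H2]].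
    pose proof H2 as HL. apply exec_Loop_DFS_spec in HL as [G2 [-> [_ _]]]; [|exact HG1].
    destruct (exec_loop_free_total (TryElse (Call [r_unroot]) Skip Break) G2
      ltac:(simpl; tauto)) as [o3 [k3 H3]].
    eexists; eexists. eapply ex_seq_ok; [eassumption|]. eapply ex_seq_ok; eassumption.
Qed.

Lemma initial_outer_inv G : wf_graph G -> initial_graph G -> outer_inv G.
Proof.
  intros Hwf [Hn He]. split; [constructor | split].
  - exact Hwf.
  - intros u v Hu _ Hr. now rewrite (proj2 (Hn u Hu)) in Hr.
  - intros v Hv _. apply Hn, Hv.
  - intros i j Hi _ Hd. now rewrite He in Hd.
  - intros i Hi Hd. now rewrite He in Hd.
  - intros i j Hi _ Hd. now rewrite He in Hd.
  - intros v Hv. apply Hn, Hv.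
  - intros i Hi. now rewrite He.
Qed.

Theorem mainTheorem5 :
  exists c : nat,
    forall G : hgraph,
      wf_graph G -> initial_graph G ->
      (exists (o : outcome) (k : nat), exec is_dag G o k) /\
      (forall (o : outcome) (k : nat),
          exec is_dag G o k -> k <= c * (nnodes G + nedges G) + c).
Proof.
  exists 1206. intros G Hwf Hinit.
  pose proof (initial_outer_inv G Hwf Hinit) as HG.
  pose proof (potential_le G) as Hpot.
  assert (Hrounds : forall o k, exec (Loop dfs_round) G o k ->
    exists G', o = Ok G' /\ inv G' /\ k <= 402 * potential G + 601).
  { intros o k H.
    destruct (exec_Loop_spec potential outer_inv inv 101 300 dfs_round (fun _ H => proj1 H)
      dfs_round_spec G o k HG H) as [G' [-> [HG' [_ Hk]]]].
    exists G'. do 2 (split; auto). lia. }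
  split.
  - destruct (exec_Loop_total potential outer_inv inv 101 300 dfs_round dfs_round_spec
      dfs_round_total G HG) as [o1 [k1 H1]].
    destruct (Hrounds o1 k1 H1) as [G1 [-> _]].
    destruct (exec_loop_free_total Check G1 ltac:(simpl; tauto)) as [o2 [k2 H2]].
    eexists; eexists. eapply ex_seq_ok; eassumption.
  - intros o k H.
    apply exec_Seq_inv in H
      as [[G1 [k1 [k2 [H1 [H2 ->]]]]] | [[k1 [H1 _]] | [G1 [k1 [H1 _]]]]];
      destruct (Hrounds _ _ H1) as [G2 [E [HG2 Hk1]]]; try discriminate.
    injection E as <-. apply Check_cost in H2; [lia | exact HG2].
Qed.
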